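(* Let $m,t,n$ be positive integers with $mt<n\le 2^m$, let $\alpha=(\alpha_1,\dots,\alpha_n)\in\mathbb{F}_{2^m}^n$ be a support tuple, and for $p\in\mathbb{F}_2^n$ with $0<\mathrm{wt}(p)\le t$, $d\in\mathbb{N}$ with $d<t$ and $\varepsilon\in\mathbb{F}_{2^m}$, let $\tilde p\in\mathbb{F}_2^n$ be defined by $\tilde p_k=1$ if and only if $\varepsilon\alpha_k^d+\prod_{l\in I_p}(\alpha_k-\alpha_l)=0$. (a) Suppose $d=0$ and $p=e^{(i_1)}+e^{(i_2)}$ with $i_1\neq i_2$, and suppose $\mathrm{wt}(\tilde p)=2$, say $I_{\tilde p}=\{j_1,j_2\}$. Then $\alpha_{i_1}+\alpha_{i_2}=\alpha_{j_1}+\alpha_{j_2}$. (b) Suppose $d=2$ and $p=e^{(i)}$ for some $i\in\{1,\dots,n\}$, and suppose $\mathrm{wt}(\tilde p)=2$, say $I_{\tilde p}=\{j_1,j_2\}$. Then $\alpha_i\alpha_{j_1}+\alpha_i\alpha_{j_2}+\alpha_{j_1}\alpha_{j_2}=0$. If, additionally, $\alpha_i\neq 0$, then $\alpha_{j_1}\neq 0$ and $\alpha_{j_2}\neq 0$.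
   Context: $\mathbb{F}_{2^m}$ denotes the finite field with $2^m$ elements. A support tuple is a tuple $\alpha\in\mathbb{F}_{2^m}^n$ with pairwise distinct entries. For $c\in\mathbb{F}_2^n$, $I_c=\{i\mid c_i=1\}$ and $\mathrm{wt}(c)=\#I_c$. $e^{(i)}$ denotes the $i$-th standard basis vector of $\mathbb{F}_2^n$. The vector $\tilde p$ is the output of decoding with the faulty error-locator polynomial $\varepsilon x^d+\prod_{l\in I_p}(x-\alpha_l)$ (its zeros among the $\alpha_k$). *)

From HB Require Import structures.
From mathcomp Require Import all_boot all_order all_algebra all_field.
Set Implicit Arguments. Unset Strict Implicit. Unset Printing Implicit Defensive.
Import GRing.Theory.
Local Open Scope ring_scope.

(* Binary vectors c in F_2^n are row vectors 'rV['F_2]_n; indices are 'I_n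
   (0-based instead of 1-based). *)

Definition supp n (c : 'rV['F_2]_n) : {set 'I_n} := [set i | c 0 i == 1].

Definition wt n (c : 'rV['F_2]_n) : nat := #|supp c|.

Definition ebase n (i : 'I_n) : 'rV['F_2]_n := delta_mx 0 i.

Definition support_tuple (F : finFieldType) n (alpha : 'I_n -> F) : Prop :=
  injective alpha.

Definition ptilde (F : finFieldType) n (alpha : 'I_n -> F)
    (p : 'rV['F_2]_n) (d : nat) (eps : F) : 'rV['F_2]_n :=
  \row_k (if eps * alpha k ^+ d + \prod_(l in supp p) (alpha k - alpha l) == 0
          then 1 else 0).

(* Both parts are Vieta's formulas.  The faulty error locator is a quadratic
   polynomial, (x - a1)(x - a2) + eps in (a) and eps x^2 + (x - a) in (b), and
   ptilde lists its zeros among the distinct alpha_k; when there are exactly two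
   of them, the difference of the two root equations factors through
   alpha_j1 - alpha_j2 <> 0, which yields the sum (and, in (b), the product) of
   the roots.  Characteristic 2 turns r1 r2 = a (r1 + r2) into the claimed
   symmetric relation. *)

From HB Require Import structures.
From mathcomp Require Import all_boot all_order all_algebra all_field.
From mathcomp Require Import ring.
Set Implicit Arguments. Unset Strict Implicit. Unset Printing Implicit Defensive.
Import GRing.Theory.
Local Open Scope ring_scope.

Lemma distinct_roots_sumE (R : idomainType) (a1 a2 c r1 r2 : R) :
  r1 != r2 ->
  c + (r1 - a1) * (r1 - a2) = 0 -> c + (r2 - a1) * (r2 - a2) = 0 ->
  r1 + r2 = a1 + a2.
Proof.
move=> neq_r root1 root2.
have : (r1 - r2) * (r1 + r2 - (a1 + a2)) = 0.
  have -> : (r1 - r2) * (r1 + r2 - (a1 + a2)) =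
            (c + (r1 - a1) * (r1 - a2)) - (c + (r2 - a1) * (r2 - a2)) by ring.
  by rewrite root1 root2 subrr.
by move/eqP; rewrite mulf_eq0 subr_eq0 (negbTE neq_r) subr_eq0 => /eqP.
Qed.

Lemma distinct_roots_mulE (R : idomainType) (e a r1 r2 : R) :
  r1 != r2 ->
  e * r1 ^+ 2 + (r1 - a) = 0 -> e * r2 ^+ 2 + (r2 - a) = 0 ->
  r1 * r2 = a * (r1 + r2).
Proof.
move=> neq_r root1 root2.
have sum_roots : e * (r1 + r2) + 1 = 0.
  have : (r1 - r2) * (e * (r1 + r2) + 1) = 0.
    have -> : (r1 - r2) * (e * (r1 + r2) + 1) =
              (e * r1 ^+ 2 + (r1 - a)) - (e * r2 ^+ 2 + (r2 - a)) by ring.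
    by rewrite root1 root2 subrr.
  by move/eqP; rewrite mulf_eq0 subr_eq0 (negbTE neq_r) => /eqP.
apply/eqP; rewrite -subr_eq0; apply/eqP.
have -> : r1 * r2 - a * (r1 + r2) =
          r2 * (e * r1 ^+ 2 + (r1 - a)) + r1 * (e * r2 ^+ 2 + (r2 - a))
          - r1 * r2 * (e * (r1 + r2) + 1) by ring.
by rewrite root1 root2 sum_roots !mulr0 addr0 subr0.
Qed.

Lemma root_neq0 (R : idomainType) (e a r : R) :
  e * r ^+ 2 + (r - a) = 0 -> a != 0 -> r != 0.
Proof.
move=> root a_neq0; apply: contra_eq_neq root => ->.
by rewrite expr0n mulr0 add0r sub0r oppr_eq0.
Qed.

Lemma supp_ebase n (i : 'I_n) : supp (ebase i) = [set i].
Proof.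
by apply/setP => k; rewrite !inE mxE eqxx /= eq_sym; case: (k == i).
Qed.

Lemma supp_ebaseD n (i1 i2 : 'I_n) :
  i1 != i2 -> supp (ebase i1 + ebase i2) = [set i1; i2].
Proof.
move=> neq_i; apply/setP => k; rewrite !inE !mxE eqxx /=.
case: (eqVneq k i1) => [->|_] /=; first by rewrite (negbTE neq_i).
by rewrite add0r; case: (k == i2).
Qed.

Lemma wt2_supp_neq n (c : 'rV['F_2]_n) (j1 j2 : 'I_n) :
  wt c = 2%N -> supp c = [set j1; j2] -> j1 != j2.
Proof. by rewrite /wt => + supp_c; rewrite supp_c cards2; case: (j1 != j2). Qed.

Section FaultyLocator.

Variables (F : finFieldType) (n : nat) (alpha : 'I_n -> F).
Hypothesis alpha_inj : support_tuple alpha.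

Lemma mem_supp_ptilde p d eps k :
  (k \in supp (ptilde alpha p d eps)) =
  (eps * alpha k ^+ d + \prod_(l in supp p) (alpha k - alpha l) == 0).
Proof. by rewrite inE mxE; case: (_ == 0). Qed.

Lemma ptilde_pair_sumE (eps : F) (i1 i2 j1 j2 : 'I_n) :
  i1 != i2 -> j1 != j2 ->
  supp (ptilde alpha (ebase i1 + ebase i2) 0 eps) = [set j1; j2] ->
  alpha i1 + alpha i2 = alpha j1 + alpha j2.
Proof.
move=> neq_i neq_j supp_pt.
have root j : j \in [set j1; j2] ->
    eps + (alpha j - alpha i1) * (alpha j - alpha i2) = 0.
  rewrite -supp_pt mem_supp_ptilde supp_ebaseD // expr0 mulr1.
  by rewrite big_setU1 ?inE // big_set1 => /eqP.
have root1 := root j1 (setU11 _ _); have root2 := root j2 (setU1r _ (set11 _)).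
by rewrite (distinct_roots_sumE _ root1 root2) // (inj_eq alpha_inj).
Qed.

Lemma ptilde_single_mulE (eps : F) (i j1 j2 : 'I_n) :
  j1 != j2 ->
  supp (ptilde alpha (ebase i) 2 eps) = [set j1; j2] ->
  [/\ alpha j1 * alpha j2 = alpha i * (alpha j1 + alpha j2),
      alpha i != 0 -> alpha j1 != 0 & alpha i != 0 -> alpha j2 != 0].
Proof.
move=> neq_j supp_pt.
have root j : j \in [set j1; j2] -> eps * alpha j ^+ 2 + (alpha j - alpha i) = 0.
  by rewrite -supp_pt mem_supp_ptilde supp_ebase big_set1 => /eqP.
have root1 := root j1 (setU11 _ _); have root2 := root j2 (setU1r _ (set11 _)).
split; [|exact: root_neq0 root1|exact: root_neq0 root2].
by apply: distinct_roots_mulE root1 root2; rewrite (inj_eq alpha_inj).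
Qed.

End FaultyLocator.

Theorem proposition5p2 (m t n : nat) (F : finFieldType)
    (alpha : 'I_n -> F) (p : 'rV['F_2]_n) (d : nat) (eps : F) :
  (0 < m)%N -> (0 < t)%N -> (0 < n)%N ->
  (m * t < n)%N -> (n <= 2 ^ m)%N ->
  #|F| = (2 ^ m)%N ->
  support_tuple alpha ->
  (0 < wt p)%N -> (wt p <= t)%N ->
  (d < t)%N ->
  (* (a) *)
  (forall (i1 i2 j1 j2 : 'I_n),
      d = 0%N -> p = ebase i1 + ebase i2 -> i1 != i2 ->
      wt (ptilde alpha p d eps) = 2%N ->
      supp (ptilde alpha p d eps) = [set j1; j2] ->
      alpha i1 + alpha i2 = alpha j1 + alpha j2)
  /\
  (* (b) *)
  (forall (i j1 j2 : 'I_n),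
      d = 2%N -> p = ebase i ->
      wt (ptilde alpha p d eps) = 2%N ->
      supp (ptilde alpha p d eps) = [set j1; j2] ->
      alpha i * alpha j1 + alpha i * alpha j2 + alpha j1 * alpha j2 = 0
      /\ (alpha i != 0 -> alpha j1 != 0 /\ alpha j2 != 0)).
Proof.
move=> _ _ _ _ _ cardF alpha_inj _ _ _.
have char2F : 2 \in [pchar F] by apply: card_finPcharP cardF _.
split=> [i1 i2 j1 j2 -> -> neq_i wt2 supp_pt | i j1 j2 -> -> wt2 supp_pt].
  exact: (ptilde_pair_sumE alpha_inj neq_i (wt2_supp_neq wt2 supp_pt) supp_pt).
have [mulE nz1 nz2] :=
  ptilde_single_mulE alpha_inj (wt2_supp_neq wt2 supp_pt) supp_pt.
split=> [|ai_neq0]; last by split; [exact: nz1 | exact: nz2].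
by rewrite -mulrDr mulE addrr_pchar2.
Qed.
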